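(* Let $n,m\ge 0$ and let $\lambda$ be a partition with $n+m$ parts. Then $$G_{\lambda}(z_1,\dots,z_n,w_1,\dots,w_m;\beta)=\sum_{\nu}G_{\lambda/\nu}(z_1,\dots,z_n;\beta)\,G_\nu(w_1,\dots,w_m;\beta),$$ the sum running over all partitions $\nu$ with $m$ parts. At $\beta=0$ this reduces to the corresponding identity for Schur and skew Schur polynomials.
   Context: A ''partition with $N$ parts'' means a weakly decreasing sequence of $N$ nonnegative integers (zeros allowed); $|\lambda|=\sum_j\lambda_j$. The Grothendieck polynomial is $G_\lambda(z_1,\dots,z_N;\beta)=\det_{1\le j,k\le N}\big(z_j^{\lambda_k+N-k}(1+\beta z_j)^{k-1}\big)/\prod_{1\le j<k\le N}(z_j-z_k)$ ($=1$ for $N=0$). For $\mu$ with $k+1$ parts and $\lambda$ with $k$ parts, $\mu\succ\lambda$ iff $\mu_j\ge\lambda_j\ge\mu_{j+1}$ ($1\le j\le k$). Single-variable skew Grothendieck polynomial: $G_{\mu/\lambda}(z;\beta)=z^{|\mu|-|\lambda|}\prod_{j=1}^k(1+\beta z-\beta z\,\delta_{\mu_{j+1},\lambda_j})$ if $\mu\succ\lambda$, and $0$ otherwise. Multivariable skew Grothendieck polynomial: for $\lambda$ with $n+m$ parts and $\nu$ with $m$ parts, $$G_{\lambda/\nu}(z_1,\dots,z_n;\beta)=\sum_{\lambda^{(1)},\dots,\lambda^{(n-1)}}\prod_{j=1}^nG_{\lambda^{(j-1)}/\lambda^{(j)}}(z_j;\beta),$$ where $\lambda^{(0)}=\lambda$,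 $\lambda^{(n)}=\nu$, and $\lambda^{(j)}$ ranges over partitions with $n+m-j$ parts (the nonzero terms are those with $\lambda^{(0)}\succ\lambda^{(1)}\succ\cdots\succ\lambda^{(n)}$). *)

From HB Require Import structures.
From mathcomp Require Import all_boot all_order all_algebra.
Set Implicit Arguments. Unset Strict Implicit. Unset Printing Implicit Defensive.
Import Order.TTheory GRing.Theory Num.Theory.
Local Open Scope ring_scope.

Definition is_partition (N : nat) (l : seq nat) : bool :=
  (size l == N) && sorted geq l.

Fixpoint all_seqs (N b : nat) : seq (seq nat) :=
  match N with
  | 0 => [:: [::]]
  | N'.+1 => flatten [seq [seq i :: s | s <- all_seqs N' b] | i <- iota 0 b.+1]
  end.

Definition bounded_parts (N b : nat) : seq (seq nat) :=
  [seq l <- all_seqs N b | sorted geq l].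

Section Groth.
Variable F : fieldType.

Definition groth (lam : seq nat) (zs : seq F) (beta : F) : F :=
  let N := size zs in
  \det (\matrix_(j < N, k < N)
          (zs`_j ^+ (nth 0%N lam k + N - k.+1) * (1 + beta * zs`_j) ^+ k))
  / \prod_(j < N) \prod_(k < N | (j < k)%N) (zs`_j - zs`_k).

Definition interlace (mu lam : seq nat) : bool :=
  (size mu == (size lam).+1) &&
  [forall j : 'I_(size lam),
     (nth 0%N lam j <= nth 0%N mu j)%N && (nth 0%N mu j.+1 <= nth 0%N lam j)%N].

Definition groth1 (mu lam : seq nat) (z beta : F) : F :=
  if interlace mu lam then
    z ^+ (sumn mu - sumn lam) *
    \prod_(j < size lam)
       (1 + beta * z - beta * z * (nth 0%N mu j.+1 == nth 0%N lam j)%:R)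
  else 0.

(* Only mu with mu_j <= lam_1 can give
   nonzero terms (interlacing), so the sum is restricted to those. *)
Fixpoint skew_groth (lam nu : seq nat) (zs : seq F) (beta : F) : F :=
  match zs with
  | [::] => (lam == nu)%:R
  | z :: zs' =>
      \sum_(mu <- bounded_parts (size lam).-1 (head 0%N lam))
         groth1 lam mu z beta * skew_groth mu nu zs' beta
  end.

End Groth.

(* Everything rests on the one-variable branching rule (groth_branching)
     G_lam(z :: w) = sum_mu G_{lam/mu}(z) G_mu(w),   lam with |w| + 1 parts,
   proved on the numerator determinant A_lam(x) = det (x_j^(lam_k+N-k-1) (1+beta x_j)^(k-1)):
   - right-multiplying A_lam(z :: w) by the bidiagonal matrix col_reduction, which
     replaces column k by (1 + beta z) col_k - z^(lam_k - lam_(k+1) + 1) col_(k+1), kills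
     the first row except for its last entry z^(lam_N) (1 + beta z)^m;
   - by a telescoping sum (window_telescope) the remaining minor is diag (w_i - z) times
     branch_mx, whose k-th column is sum_t phi_k(t) (column of a part equal to t), where
     phi_k(t) is the factor of G_{lam/mu}(z) contributed by mu_k = t (branch_weight);
   - expanding det branch_mx by multilinearity in the rows (det_sum_rows) gives
     z^(lam_N) det branch_mx = sum_mu G_{lam/mu}(z) A_mu(w) (det_branch_mx).
   This yields (1 + beta z)^m A_lam(z :: w) = (1 + beta z)^m prod_i (z - w_i) sum_mu ...
   over any commutative ring; the factor (1 + beta z)^m is cancelled in K[X] with z := X
   before evaluating back at z (branching_det), and dividing by the Vandermonde products
   gives the rule.  The theorem follows by induction on z: expand the first variable, use
   the induction hypothesis for every G_mu(z' ++ w), enlarge the range of nu from mu_1 to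
   lam_1 (the added skew terms vanish, skew_groth_vanish) and exchange the sums. *)

From mathcomp Require Import all_boot all_algebra.
From mathcomp Require Import ring zify.
Import GRing.Theory.
Set Implicit Arguments. Unset Strict Implicit. Unset Printing Implicit Defensive.

Lemma mem_all_seqs N b s :
  (s \in all_seqs N b) = (size s == N) && all (fun x => x <= b) s.
Proof.
elim: N s => [|N IH] [|x s] //; rewrite {1}/all_seqs -/(all_seqs N b).
  by apply/flatten_mapP => -[i _] /mapP [t _].
apply/flatten_mapP/idP => [[i]|/andP [hs /andP[hx ha]]].
  rewrite mem_iota add0n => /andP[_ hi] /mapP [t ht [-> ->]].
  by move: ht; rewrite IH /= -ltnS hi eqSS => /andP[-> ->].
exists x; first by rewrite mem_iota.
by apply/mapP; exists s => //; rewrite IH -eqSS hs.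
Qed.

Lemma uniq_all_seqs N b : uniq (all_seqs N b).
Proof.
elim: N => [|N IH] //; rewrite /all_seqs -/(all_seqs N b).
apply: allpairs_uniq => //; first exact: iota_uniq.
by move=> [i s] [j t] _ _ /= [-> ->].
Qed.

Lemma mem_bounded_parts N b s :
  (s \in bounded_parts N b) = [&& size s == N, all (fun x => x <= b) s & sorted geq s].
Proof. by rewrite mem_filter mem_all_seqs andbC andbA. Qed.

Lemma uniq_bounded_parts N b : uniq (bounded_parts N b).
Proof. exact/filter_uniq/uniq_all_seqs. Qed.

Definition ffun_seq m T (c : {ffun 'I_m -> 'I_T}) : seq nat :=
  [seq (c k : nat) | k <- enum 'I_m].

Lemma size_ffun_seq m T (c : {ffun 'I_m -> 'I_T}) : size (ffun_seq c) = m.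
Proof. by rewrite size_map size_enum_ord. Qed.

Lemma nth_ffun_seq m T (c : {ffun 'I_m -> 'I_T}) (k : 'I_m) :
  nth 0 (ffun_seq c) k = c k.
Proof. by rewrite (nth_map k) ?size_enum_ord // nth_ord_enum. Qed.

Lemma perm_ffun_seq m b :
  perm_eq [seq ffun_seq c | c <- index_enum {ffun 'I_m -> 'I_b.+1}] (all_seqs m b).
Proof.
apply: uniq_perm; last 1 first.
- move=> s; rewrite mem_all_seqs; apply/mapP/idP => [[c _ ->]|/andP[/eqP hs ha]].
    rewrite size_ffun_seq eqxx; apply/allP => _ /mapP [k _ ->].
    by rewrite -ltnS.
  exists [ffun k : 'I_m => (inord (nth 0 s k) : 'I_b.+1)]; first by rewrite mem_index_enum.
  apply: (@eq_from_nth _ 0); first by rewrite size_ffun_seq.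
  move=> i; rewrite hs => hi.
  rewrite (nth_ffun_seq _ (Ordinal hi)) ffunE inordK //= ltnS.
  by apply: (allP ha); rewrite mem_nth // hs.
- rewrite map_inj_uniq ?index_enum_uniq // => c1 c2 e.
  apply/ffunP => k; apply: val_inj.
  by move: (congr1 (nth 0 ^~ k) e); rewrite /= !nth_ffun_seq.
- exact: uniq_all_seqs.
Qed.

Lemma sorted_geq_nth s i j : sorted geq s -> (i <= j < size s)%N ->
  (nth 0 s j <= nth 0 s i)%N.
Proof.
move=> hs /andP[hij hj].
have tr : transitive geq by move=> a b c h1 h2; apply: leq_trans h2 h1.
by apply: (sorted_leq_nth tr (fun x => leqnn x) 0 hs); rewrite ?inE // (leq_ltn_trans hij).
Qed.

Lemma all_le_head s : sorted geq s -> all (fun x => x <= head 0 s) s.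
Proof.
move=> hs; apply/(all_nthP 0) => i hi.
by rewrite -nth0 sorted_geq_nth // hi andbT.
Qed.

Lemma head_le s b : all (fun x => x <= b) s -> (head 0 s <= b)%N.
Proof. by case: s => //= x s /andP[]. Qed.

Lemma interlace_sorted lam mu : interlace lam mu -> sorted geq mu.
Proof.
case/andP=> _ /forallP H; apply/(sortedP 0) => i hi.
case/andP: (H (Ordinal hi)) => /= h1 _.
case/andP: (H (Ordinal (ltnW hi))) => /= _ h2.
exact: leq_trans h1 h2.
Qed.

Lemma perm_bounded_parts_head m b1 b2 : (b1 <= b2)%N ->
  perm_eq (bounded_parts m b1) [seq nu <- bounded_parts m b2 | head 0 nu <= b1].
Proof.
move=> hb; apply: uniq_perm => [||s]; rewrite ?filter_uniq ?uniq_all_seqs //.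
rewrite mem_bounded_parts mem_filter mem_bounded_parts.
have [hs|] := boolP (sorted geq s); rewrite ?andbF //= !andbT.
case: (size s == m); rewrite /= ?andbF //; apply/idP/idP => [ha|/andP[hh _]].
  by rewrite head_le //=; apply/allP => x /(allP ha) /leq_trans; apply.
by apply/allP => x /(allP (all_le_head hs)) /leq_trans; apply.
Qed.

Local Open Scope ring_scope.

Section RingSums.
Variable R : comPzRingType.

Lemma sum_ffun_all_seqs (G : seq nat -> R) m b :
  \sum_(c : {ffun 'I_m -> 'I_b.+1}) G (ffun_seq c) = \sum_(s <- all_seqs m b) G s.
Proof. by rewrite -(perm_big _ (perm_ffun_seq m b)) big_map. Qed.

Lemma sum_bounded_parts_extend (G : seq nat -> R) m b1 b2 : (b1 <= b2)%N ->
  (forall nu, (b1 < head 0%N nu)%N -> G nu = 0) ->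
  \sum_(nu <- bounded_parts m b1) G nu = \sum_(nu <- bounded_parts m b2) G nu.
Proof.
move=> hb hG; rewrite (perm_big _ (perm_bounded_parts_head m hb)) big_filter big_mkcond.
by apply: eq_bigr => nu _; case: leqP => // /hG ->.
Qed.

Lemma sum_window (F : nat -> R) a d N : (a + d < N)%N ->
  \sum_(t < N) (if (a <= t <= a + d)%N then F t else 0) = \sum_(u < d.+1) F (a + u)%N.
Proof.
move=> hN; transitivity (\sum_(a <= t < (a + d).+1) F t).
  rewrite big_geq_mkord (big_ord_widen_cond _ _ _ hN) big_mkcond.
  by rewrite [RHS]big_mkcond; apply: eq_bigr => t _; rewrite ltnS.
have := big_addn 0 (a + d).+1 a xpredT F; rewrite add0n => ->.
rewrite -addnS addKn big_mkord.
by apply: eq_bigr => u _; rewrite addnC.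
Qed.

Lemma sum_delta n (F : nat -> R) k :
  \sum_(i < n) (i == k :> nat)%:R * F i = if (k < n)%N then F k else 0.
Proof.
transitivity (\sum_(i < n | i == k :> nat) F i); last exact: big_ord1_eq.
by rewrite [RHS]big_mkcond; apply: eq_bigr => i _; case: eqP; rewrite ?mul1r ?mul0r.
Qed.

Lemma det_sum_rows m T (phi : 'I_m -> 'I_T -> R) (E : 'I_m -> 'I_T -> 'I_m -> R) :
  \det (\matrix_(k < m, i < m) \sum_(t < T) phi k t * E k t i)
  = \sum_(c : {ffun 'I_m -> 'I_T})
      (\prod_k phi k (c k)) * \det (\matrix_(k < m, i < m) E k (c k) i).
Proof.
rewrite /determinant.
under eq_bigr => s _ do under eq_bigr => k _ do rewrite !mxE.
under eq_bigr => s _ do rewrite bigA_distr_bigA big_distrr.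
rewrite exchange_big; apply: eq_bigr => c _.
rewrite big_distrr; apply: eq_bigr => s _.
rewrite /= big_split /= mulrCA; congr (_ * (_ * _)); apply: eq_bigr => k _.
by rewrite !mxE.
Qed.

(* The telescoping identity behind the column reduction: multiplying the geometric-like
   sum of one column by (w - z) leaves only its two boundary terms. *)
Lemma window_telescope (z w beta : R) e d :
  (w - z) * \sum_(u < d.+1)
      z ^+ (d - u) * (1 + beta * z - beta * z * (u == 0%N :> nat)%:R) * w ^+ (e + u)
  = (1 + beta * z) * w ^+ (e + d).+1 - z ^+ d.+1 * w ^+ e * (1 + beta * w).
Proof.
elim: d => [|d IH].
  by rewrite big_ord1 /= subnn !addn0 expr1 exprS; ring.
rewrite big_ord_recr /= subnn mulrDr.
have -> : \sum_(u < d.+1) z ^+ (d.+1 - u) * (1 + beta * z - beta * z * (u == 0%N :> nat)%:R)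
      * w ^+ (e + u) =
    z * \sum_(u < d.+1) z ^+ (d - u) * (1 + beta * z - beta * z * (u == 0%N :> nat)%:R)
      * w ^+ (e + u).
  rewrite big_distrr; apply: eq_bigr => u _.
  have hu : (u <= d)%N by rewrite -ltnS.
  by rewrite subSn // exprS -!mulrA.
rewrite mulrCA IH !addnS (exprS w (e + d).+1) (exprS z d.+1); ring.
Qed.

End RingSums.

Section Branching.
Variable R : comPzRingType.
Implicit Types (lam mu : seq nat) (z beta x : R).

(* Entry of the Grothendieck numerator matrix (N x N) in column k (counted from 0)
   for a part equal to t and the variable x; groth_mx is that matrix. *)
Definition part_entry (N : nat) beta x (t k : nat) : R :=
  x ^+ (t + N - k.+1) * (1 + beta * x) ^+ k.

Definition groth_mx (N : nat) lam (xs : seq R) beta : 'M[R]_N :=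
  \matrix_(j < N, k < N) part_entry N beta xs`_j (nth 0%N lam k) k.

(* The single-variable skew polynomial groth1, over an arbitrary commutative
   ring: the column reduction is carried out over the polynomial ring K[X]. *)
Definition branch_coef lam mu z beta : R :=
  if interlace lam mu then
    z ^+ (sumn lam - sumn mu) *
    \prod_(j < size mu) (1 + beta * z - beta * z * (nth 0%N lam j.+1 == nth 0%N mu j)%:R)
  else 0.

Definition branch_weight lam z beta (k t : nat) : R :=
  if (nth 0%N lam k.+1 <= t <= nth 0%N lam k)%N then
    z ^+ (nth 0%N lam k - t) * (1 + beta * z - beta * z * (nth 0%N lam k.+1 == t)%:R)
  else 0.

Lemma branch_coef_prod m lam mu z beta : size lam = m.+1 -> size mu = m ->
  branch_coef lam mu z beta =
  z ^+ (nth 0%N lam m) * \prod_(k < m) branch_weight lam z beta k (nth 0%N mu k).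
Proof.
move=> hl hm; rewrite /branch_coef /interlace hl hm eqxx /=.
case: (boolP [forall j : 'I_m, _]) => [/forallP H | /forallPn [k Hk]]; last first.
  by rewrite (bigD1 k) //= /branch_weight andbC (negbTE Hk) mul0r mulr0.
under [in RHS]eq_bigr => k _ do rewrite /branch_weight andbC (H k).
rewrite big_split /= prodrXr mulrA -exprD; congr (_ ^+ _ * _).
have sumn_ord s : sumn s = (\sum_(i < size s) nth 0%N s i)%N.
  by rewrite sumnE (big_nth 0) big_mkord.
have split_lam : (\sum_(k < m) nth 0%N lam k =
    \sum_(k < m) (nth 0%N lam k - nth 0%N mu k) + \sum_(k < m) nth 0%N mu k)%N.
  by rewrite -big_split; apply: eq_bigr => k _ /=; rewrite subnK //; case/andP: (H k).
rewrite !sumn_ord hl hm big_ord_recr /= split_lam.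
by rewrite addnAC addnK addnC.
Qed.

Definition branch_mx (m : nat) lam z beta (w : seq R) : 'M[R]_m :=
  \matrix_(i < m, k < m) \sum_(t < (head 0%N lam).+1)
      branch_weight lam z beta k t * part_entry m beta w`_i t k.

(* Multilinear expansion of det branch_mx: only interlacing mu survive, and these are
   exactly the partitions with m parts bounded by lam_1. *)
Lemma det_branch_mx m lam z beta (w : seq R) : size lam = m.+1 ->
  \sum_(mu <- bounded_parts m (head 0%N lam)) branch_coef lam mu z beta * \det (groth_mx m mu w beta)
  = z ^+ (nth 0%N lam m) * \det (branch_mx m lam z beta w).
Proof.
move=> hl; set b := head 0%N lam.
have -> : branch_mx m lam z beta w = (\matrix_(k < m, i < m) \sum_(t < b.+1)
    branch_weight lam z beta k t * part_entry m beta w`_i t k)^T.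
  by apply/matrixP => i k; rewrite !mxE.
rewrite det_tr (det_sum_rows (fun k (t : 'I_b.+1) => branch_weight lam z beta k t)).
rewrite big_distrr /= big_filter big_mkcond -(sum_ffun_all_seqs _ m b).
apply: eq_bigr => c _.
have coef_c : branch_coef lam (ffun_seq c) z beta =
    z ^+ nth 0%N lam m * \prod_(k < m) branch_weight lam z beta k (c k).
  rewrite (branch_coef_prod z beta hl (size_ffun_seq c)).
  by under eq_bigr => k _ do rewrite nth_ffun_seq.
case: ifP => [_|unsorted]; rewrite mulrA -coef_c.
  rewrite -det_tr; congr (_ * \det _).
  by apply/matrixP => k i; rewrite !mxE nth_ffun_seq.
by rewrite /branch_coef; case: ifP => [/interlace_sorted|_]; rewrite ?unsorted ?mul0r.
Qed.

Lemma branch_column m lam z beta x (k : nat) : (k < m)%N ->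
  (nth 0%N lam k.+1 <= nth 0%N lam k <= head 0%N lam)%N ->
  (x - z) * \sum_(t < (head 0%N lam).+1) branch_weight lam z beta k t * part_entry m beta x t k
  = part_entry m.+1 beta x (nth 0%N lam k) k * (1 + beta * z)
    - part_entry m.+1 beta x (nth 0%N lam k.+1) k.+1
      * z ^+ (nth 0%N lam k - nth 0%N lam k.+1).+1.
Proof.
move=> hk /andP[hlk hhead].
set a := nth 0%N lam k.+1; set d := (nth 0%N lam k - a)%N.
have lam_k : nth 0%N lam k = (a + d)%N by rewrite subnKC.
pose F t := z ^+ (a + d - t) * (1 + beta * z - beta * z * (a == t)%:R) * part_entry m beta x t k.
rewrite (eq_bigr (fun t : 'I_(head 0%N lam).+1 => if (a <= t <= a + d)%N then F t else 0)); last first.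
  by move=> t _; rewrite /branch_weight /F -/a -lam_k; case: ifP; rewrite ?mul0r.
rewrite sum_window -?lam_k // /F.
have shift u : (a + u + m - k.+1 = (a + (m - k.+1)) + u)%N by lia.
have gap u : (a + d - (a + u) = d - u)%N by rewrite subnDl.
have at_start u : (a == a + u)%N = (u == 0%N) by rewrite -{1}[a]addn0 eqn_add2l eq_sym.
under eq_bigr => u _ do rewrite /part_entry gap at_start shift mulrA.
rewrite -big_distrl /= mulrA window_telescope /part_entry lam_k.
have -> : (a + d + m.+1 - k.+1 = (a + (m - k.+1) + d).+1)%N by lia.
have -> : (a + m.+1 - k.+2 = a + (m - k.+1))%N by lia.
by rewrite [(1 + beta * x) ^+ k.+1]exprS; ring.
Qed.

End Branching.

Section ColumnReduction.
Variables (R : comPzRingType) (m : nat) (lam : seq nat) (z beta : R) (w : seq R).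
Hypotheses (size_lam : size lam = m.+1) (sorted_lam : sorted geq lam).

Let A : 'M[R]_m.+1 := groth_mx m.+1 lam (z :: w) beta.
Let entry (j k : nat) : R := part_entry m.+1 beta (z :: w)`_j (nth 0%N lam k) k.
Let gap (k : nat) : nat := (nth 0%N lam k - nth 0%N lam k.+1).+1.

Definition col_reduction : 'M[R]_m.+1 :=
  \matrix_(i < m.+1, k < m.+1)
    ((i == k :> nat)%:R * (if (k < m)%N then 1 + beta * z else 1)
     - (i == k.+1 :> nat)%:R * z ^+ gap k).

(* col_reduction is lower triangular with diagonal (1 + beta z, ..., 1 + beta z, 1). *)
Lemma det_col_reduction : \det col_reduction = (1 + beta * z) ^+ m.
Proof.
rewrite det_trig; last first.
  apply/is_trig_mxP => i k lt_ik; rewrite mxE.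
  by rewrite (ltn_eqF lt_ik) (@ltn_eqF i k.+1 (ltnW lt_ik)) !mul0r subr0.
rewrite big_ord_recr /= mxE eqxx ltnn (ltn_eqF (ltnSn m)) mul1r mul0r subr0 mulr1.
rewrite -[in RHS](card_ord m) -prodr_const; apply: eq_bigr => i _.
by rewrite mxE /= eqxx (ltn_eqF (ltnSn i)) ltn_ord mul1r mul0r subr0.
Qed.

Lemma lam_window (k : nat) : (k < m)%N ->
  (nth 0%N lam k.+1 <= nth 0%N lam k <= head 0%N lam)%N.
Proof. by move=> hk; rewrite -nth0 !sorted_geq_nth ?size_lam //; lia. Qed.

Lemma col_reduction_entry (j k : 'I_m.+1) :
  (A *m col_reduction) j k =
  entry j k * (if (k < m)%N then 1 + beta * z else 1)
  - (if (k < m)%N then entry j k.+1 * z ^+ gap k else 0).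
Proof.
pose c := if (k < m)%N then 1 + beta * z else 1.
rewrite !mxE (eq_bigr (fun i : 'I_m.+1 => (i == k :> nat)%:R * (entry j i * c)
    - (i == k.+1 :> nat)%:R * (entry j i * z ^+ gap k))); last first.
  by move=> i _; rewrite /A /entry !mxE /c; ring.
rewrite sumrB (sum_delta _ (fun i => entry j i * c)).
by rewrite (sum_delta _ (fun i => entry j i * z ^+ gap k)) ltn_ord ltnS.
Qed.

Lemma col_reduction_first_row (k : 'I_m.+1) : (k < m)%N -> (A *m col_reduction) 0 k = 0.
Proof.
move=> hk; rewrite col_reduction_entry hk /entry /part_entry /=.
have /andP[hlk _] := lam_window hk.
have -> : (nth 0%N lam k + m.+1 - k.+1 = gap k + (nth 0%N lam k.+1 + m.+1 - k.+2))%N.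
  by rewrite /gap; lia.
by rewrite exprD exprS; ring.
Qed.

Lemma col_reduction_minor :
  row' 0 (col' ord_max (A *m col_reduction))
  = diag_mx (\row_i (w`_i - z)) *m branch_mx m lam z beta w.
Proof.
apply/matrixP => i k; rewrite mul_diag_mx [LHS]mxE [LHS]mxE col_reduction_entry.
by rewrite lift0 lift_max ltn_ord !mxE branch_column //; exact: lam_window.
Qed.

Lemma det_col_reduction_expand :
  (1 + beta * z) ^+ m * \det A
  = (1 + beta * z) ^+ m * (\prod_(i < m) (z - w`_i) *
      \sum_(mu <- bounded_parts m (head 0%N lam))
        branch_coef lam mu z beta * \det (groth_mx m mu w beta)).
Proof.
have -> : (1 + beta * z) ^+ m * \det A = \det (A *m col_reduction).
  by rewrite det_mulmx det_col_reduction mulrC.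
rewrite (expand_det_row _ ord0) big_ord_recr /=.
rewrite big1 ?add0r => [|k _]; last by rewrite col_reduction_first_row ?mul0r /=.
rewrite col_reduction_entry ltnn subr0 mulr1 /cofactor col_reduction_minor.
rewrite det_mulmx det_diag (det_branch_mx _ _ _ size_lam).
under eq_bigr => i _ do rewrite mxE -opprB.
rewrite prodrN card_ord /entry /part_entry /=.
have sign2 : (-1) ^+ m * (-1) ^+ m = 1 :> R by rewrite -exprMn mulrNN mulr1 expr1n.
rewrite addnK add0n (mulrA ((-1) ^+ m)) (mulrA ((-1) ^+ m)) sign2 mul1r; ring.
Qed.

End ColumnReduction.

Section RingMorphism.
Variables (R S : comPzRingType) (f : {rmorphism R -> S}).

Lemma nth_map_rmorph (xs : seq R) j : (map f xs)`_j = f xs`_j.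
Proof.
have [lt_j|ge_j] := ltnP j (size xs); first by rewrite (nth_map 0).
by rewrite !nth_default ?size_map // rmorph0.
Qed.

Lemma groth_mx_map N lam xs beta :
  map_mx f (groth_mx N lam xs beta) = groth_mx N lam (map f xs) (f beta).
Proof.
apply/matrixP => j k; rewrite !mxE /part_entry nth_map_rmorph.
by rewrite rmorphM !rmorphXn rmorphD rmorph1 rmorphM.
Qed.

Lemma branch_coef_map lam mu (z beta : R) :
  f (branch_coef lam mu z beta) = branch_coef lam mu (f z) (f beta).
Proof.
rewrite /branch_coef; case: ifP => _; last exact: rmorph0.
rewrite rmorphM rmorphXn rmorph_prod; congr (_ * _); apply: eq_bigr => j _.
by rewrite !rmorphB rmorphD rmorph1 !rmorphM rmorph_nat.
Qed.

End RingMorphism.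

(* The branching rule for numerator determinants over a field: the factor
   (1 + beta X)^m is cancelled in the domain K[X], then X is evaluated at z. *)
Lemma branching_det (K : fieldType) m lam (z beta : K) (w : seq K) :
  size lam = m.+1 -> sorted geq lam ->
  \det (groth_mx m.+1 lam (z :: w) beta)
  = \prod_(i < m) (z - w`_i) *
      \sum_(mu <- bounded_parts m (head 0%N lam))
        branch_coef lam mu z beta * \det (groth_mx m mu w beta).
Proof.
move=> hl hs; pose ev : {rmorphism {poly K} -> K} := horner_eval z.
have ev_X : ev 'X = z by rewrite /ev /= horner_evalE hornerX.
have ev_C c : ev c%:P = c by rewrite /ev /= horner_evalE hornerC.
have ev_w : map ev (map polyC w) = w.
  by rewrite -map_comp -[RHS]map_id; apply: eq_map => c /=; rewrite ev_C.
have unit_nz : (1 + beta%:P * 'X : {poly K}) ^+ m != 0.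
  apply/expf_neq0/negP => /eqP/(congr1 (horner_eval 0)).
  rewrite !horner_evalE hornerD hornerM hornerX hornerC horner0 mulr0 addr0.
  by move/eqP; rewrite oner_eq0.
move: (det_col_reduction_expand 'X beta%:P (map polyC w) hl hs) => /(mulfI unit_nz).
move=> /(congr1 ev); rewrite -det_map_mx groth_mx_map /= ev_X ev_C ev_w => ->.
rewrite rmorphM rmorph_prod rmorph_sum; congr (_ * _).
  by apply: eq_bigr => i _; rewrite rmorphB ev_X -nth_map_rmorph ev_w.
apply: eq_bigr => mu _.
by rewrite rmorphM branch_coef_map -det_map_mx groth_mx_map ev_X ev_C ev_w.
Qed.

Section BranchingRule.
Variable K : fieldType.

Definition vandermonde (xs : seq K) : K :=
  \prod_(j < size xs) \prod_(k < size xs | (j < k)%N) (xs`_j - xs`_k).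

Lemma grothE lam (xs : seq K) beta :
  groth lam xs beta = \det (groth_mx (size xs) lam xs beta) / vandermonde xs.
Proof. by []. Qed.

Lemma vandermonde_cons z (w : seq K) :
  vandermonde (z :: w) = \prod_(k < size w) (z - w`_k) * vandermonde w.
Proof.
rewrite /vandermonde /= big_ord_recl; congr (_ * _).
  by rewrite big_mkcond big_ord_recl /= mul1r.
apply: eq_bigr => j _; rewrite big_mkcond big_ord_recl /= mul1r [RHS]big_mkcond.
by apply: eq_bigr => k _; rewrite /bump !add0n ltnS.
Qed.

Lemma groth_branching lam (z beta : K) (w : seq K) :
  size lam = (size w).+1 -> sorted geq lam -> z \notin w ->
  groth lam (z :: w) beta =
  \sum_(mu <- bounded_parts (size w) (head 0%N lam))
     groth1 lam mu z beta * groth mu w beta.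
Proof.
move=> hl hs z_notin_w.
have diff_nz : \prod_(k < size w) (z - w`_k) != 0.
  apply/prodf_neq0 => k _; rewrite subr_eq0.
  by apply: contraNneq z_notin_w => ->; rewrite mem_nth.
rewrite grothE /= branching_det // vandermonde_cons -mulf_div divff // mul1r.
by rewrite big_distrl; apply: eq_bigr => mu _; rewrite mulrA.
Qed.

End BranchingRule.

(* G_{mu/nu} vanishes when nu_1 > mu_1: interlacing chains cannot increase the first part. *)
Lemma skew_groth_vanish (K : fieldType) (beta : K) zs mu nu :
  (head 0%N mu < head 0%N nu)%N -> skew_groth mu nu zs beta = 0.
Proof.
elim: zs mu => [|z zs IH] mu lt_head /=.
  by case: eqP => // eq_mu; rewrite eq_mu ltnn in lt_head.
rewrite big1_seq // => kap /andP[_]; rewrite mem_bounded_parts => /and3P[_ kap_le _].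
by rewrite IH ?mulr0 // (leq_ltn_trans (head_le kap_le)).
Qed.

Unset Implicit Arguments.

Theorem mainTheorem3 (F : fieldType) (n m : nat) (lam : seq nat)
    (z w : seq F) (beta : F) :
  size z = n -> size w = m -> is_partition (n + m) lam ->
  uniq (z ++ w) ->
  groth lam (z ++ w) beta =
  \sum_(nu <- bounded_parts m (head 0%N lam))
     skew_groth lam nu z beta * groth nu w beta.
Proof.
move=> <- size_w; elim: z lam => [|z1 z IH] lam;
  rewrite /is_partition /= => /andP[/eqP size_lam sorted_lam] uniq_zw.
  rewrite (bigD1_seq lam) ?uniq_bounded_parts ?mem_bounded_parts ?size_lam ?eqxx
    ?all_le_head //= mul1r big1 ?addr0 // => nu ne_nu.
  by rewrite eq_sym (negbTE ne_nu) mul0r.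
case/andP: uniq_zw => z1_notin uniq_zw.
rewrite groth_branching // ?size_lam ?size_cat ?size_w //.
under eq_big_seq => mu.
  rewrite mem_bounded_parts => /and3P[/eqP size_mu mu_le sorted_mu].
  rewrite IH ?[is_partition _ _]/is_partition ?size_mu ?eqxx //.
  rewrite (sum_bounded_parts_extend m (head_le mu_le)); last first.
    by move=> nu /skew_groth_vanish ->; rewrite mul0r.
  rewrite big_distrr.
  over.
rewrite addSn /= exchange_big; apply: eq_bigr => nu _.
by rewrite big_distrl /=; apply: eq_bigr => mu _; rewrite mulrA.
Qed.
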